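(* Let $F$ be a $4$-flipclass of $\mathfrak S_n$. Then the support graph $S_F$ and the time-support graph $TS_F$ are isomorphic (as edge-labelled directed graphs).
   Context: $\mathfrak S_n$ is the symmetric group on $[n]$, $T$ its transpositions, $\ell$ the length w.r.t. simple transpositions. The Bruhat graph $B(\mathfrak S_n)$ has an edge $x\xrightarrow{t}y$ iff $yx^{-1}=t\in T$ and $\ell(x)<\ell(y)$. $P_h(u,v)$ is the set of paths $u=x_0\to\cdots\to x_h=v$ of length $h$. Between two fixed vertices there are $0$ or $2$ paths of length $2$; each is the flip of the other. The $i$-th flip operator $f_i$ ($i\in[h-1]$) on $P_h(u,v)$ replaces $x_{i-1}\to x_i\to x_{i+1}$ by its flip; the orbits of $\langle f_1,\dots,f_{h-1}\rangle$ on $P_h(u,v)$ are $h$-flipclasses. For a flipclass $F$, the support graph $S_F$ is the edge-labelled subgraph of $B(\mathfrak S_n)$ formed by all vertices and edges lying on paths of $F$; the time-support graph $TS_F$ has vertices $(a,i)$, $0\le i\le h$, such that some path $(x_0,\dots,x_h)\in F$ has $x_i=a$, and edges $(a,i)\xrightarrow{t}(b,i+1)$ whenever some path of $F$ contains the edge $x_i=a\xrightarrow{t}b=x_{i+1}$. *)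

From mathcomp Require Import all_boot all_order all_fingroup.
Set Implicit Arguments. Unset Strict Implicit. Unset Printing Implicit Defensive.

Section Bruhat.
Variable n : nat.
Local Notation perm := {perm 'I_n}.

Definition blen (s : perm) : nat :=
  #|[set ij : 'I_n * 'I_n | (ij.1 < ij.2) && (s ij.2 < s ij.1)]|.

Definition is_transp (t : perm) : bool :=
  [exists i : 'I_n, exists j : 'I_n, (i != j) && (t == tperm i j)].

(* Label of x -> y: the permutation y x^{-1} (function composition).
   In mathcomp, (x^-1 * y) k = y (x^-1 k), i.e. x^-1 * y = y o x^{-1}. *)
Definition blabel (x y : perm) : perm := (x^-1 * y)%g.

Definition bedge (x y : perm) : bool := is_transp (blabel x y) && (blen x < blen y).

Variable h : nat.
Local Notation path_t := {ffun 'I_h.+1 -> perm}.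

Definition prv (i : 'I_h) : 'I_h.+1 := widen_ord (leqnSn h) i.
Definition nxt (i : 'I_h) : 'I_h.+1 := lift ord0 i.

Definition bpath (p : path_t) : bool :=
  [forall i : 'I_h, bedge (p (prv i)) (p (nxt i))].

(* q = f_i p for some i in [h-1]: q is the path obtained from p by replacing
   x_{i-1} -> x_i -> x_{i+1} by its flip (the other length-2 path between
   x_{i-1} and x_{i+1}), i.e. q differs from p exactly at the position i. *)
Definition flip_step (p q : path_t) : bool :=
  [&& bpath p, bpath q &
   [exists i : 'I_h.+1, [&& 0 < i, i < h, p i != q i &
                          [forall j : 'I_h.+1, (j != i) ==> (p j == q j)]]]].

Definition flipclass (F : {set path_t}) : Prop :=
  exists p : path_t, bpath p /\ F = [set q | connect flip_step p q].

Definition supV (F : {set path_t}) : {set perm} :=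
  \bigcup_(p in F) [set p i | i : 'I_h.+1].
Definition supE (F : {set path_t}) : {set perm * perm * perm} :=
  \bigcup_(p in F) [set (p (prv i), blabel (p (prv i)) (p (nxt i)), p (nxt i)) | i : 'I_h].

Definition tsupV (F : {set path_t}) : {set perm * 'I_h.+1} :=
  \bigcup_(p in F) [set (p i, i) | i : 'I_h.+1].
Definition tsupE (F : {set path_t}) : {set (perm * 'I_h.+1) * perm * (perm * 'I_h.+1)} :=
  \bigcup_(p in F) [set ((p (prv i), prv i), blabel (p (prv i)) (p (nxt i)), (p (nxt i), nxt i)) | i : 'I_h].

End Bruhat.

Definition lgraph_iso (V1 V2 L : finType) (A1 : {set V1}) (E1 : {set V1 * L * V1})
  (A2 : {set V2}) (E2 : {set V2 * L * V2}) : Prop :=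
  exists f : V1 -> V2,
    [/\ {in A1 &, injective f}, f @: A1 = A2,
        (forall e, e \in E1 -> (e.1.1 \in A1) && (e.2 \in A1)),
        (forall e, e \in E2 -> (e.1.1 \in A2) && (e.2 \in A2)) &
        (forall a b t, a \in A1 -> b \in A1 -> ((a, t, b) \in E1) = ((f a, t, f b) \in E2))].

(* All paths of a flipclass share their endpoints, and a flip replaces two
   consecutive transposition labels by two others with the same product, so it
   preserves the equivalence relation generated by the labels.  It suffices to
   show that no permutation occurs at two times i < j in paths of the class:
   then the time of a vertex is well defined and a |-> (a, time a) is the
   isomorphism.  Lengths exclude i = 0 and j = 4, parity excludes i + j odd,
   and x_1 = x'_3 is excluded by counting inversions on the 3-element supports
   of the three-step paths x'_0 -> x'_3 and x_1 -> x_4, whose labels multiply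
   to a transposition. *)

From mathcomp Require Import all_boot all_order all_fingroup zify.
Set Implicit Arguments. Unset Strict Implicit. Unset Printing Implicit Defensive.

Section Support.
Variable n : nat.
Local Notation perm := {perm 'I_n}.
Implicit Types (s t : perm) (S : {set 'I_n}) (i j k : 'I_n).

Definition supp s : {set 'I_n} := [set k | s k != k].

Lemma notin_supp s k : k \notin supp s -> s k = k.
Proof. by rewrite inE negbK => /eqP. Qed.

Lemma mem_supp_img s k : (s k \in supp s) = (k \in supp s).
Proof. by rewrite !inE (inj_eq perm_inj). Qed.

Lemma supp_closed s S k :
  (supp s \subset S) || [disjoint supp s & S] -> k \in S -> s k \in S.
Proof.
case: (boolP (k \in supp s)) => [ks /orP[/subsetP sS _| dS kS] | /notin_supp -> //].
  by rewrite sS ?mem_supp_img.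
by rewrite (disjointFr dS ks) in kS.
Qed.

Lemma ltn_ord_neq i j : i < j -> i != j.
Proof. by move=> lt_ij; rewrite -val_eqE /= neq_ltn lt_ij. Qed.

Lemma supp_tperm i j : i != j -> supp (tperm i j) = [set i; j].
Proof.
move=> nij; apply/setP => k; rewrite !inE.
case: tpermP => [->|->|/eqP nki /eqP nkj]; first by rewrite eqxx eq_sym nij.
  by rewrite eqxx orbT nij.
by rewrite eqxx (negbTE nki) (negbTE nkj).
Qed.

Lemma is_transp_tperm t : is_transp t -> exists i j, i < j /\ t = tperm i j.
Proof.
case/existsP=> i /existsP [j /andP [nij /eqP ->]].
case: (ltngtP i j) => [lt_ij|lt_ji|eq_ij]; first by exists i, j.
  by exists j, i; rewrite tpermC.
by move: nij; rewrite (val_inj eq_ij) eqxx.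
Qed.

Section Transposition.
Variable t : perm.
Hypothesis t_transp : is_transp t.

Lemma is_transpK : involutive t.
Proof. by case/is_transp_tperm: t_transp => i [j [_ ->]] k; rewrite tpermK. Qed.

Lemma is_transp2 : (t * t = 1)%g.
Proof. by case/is_transp_tperm: t_transp => i [j [_ ->]]; rewrite tperm2. Qed.

Lemma is_transpV : (t^-1 = t)%g.
Proof. by case/is_transp_tperm: t_transp => i [j [_ ->]]; rewrite tpermV. Qed.

Lemma odd_transp : odd_perm t.
Proof.
by case/is_transp_tperm: t_transp => i [j [lt_ij ->]]; rewrite odd_tperm ltn_ord_neq.
Qed.

Lemma card_supp_transp : #|supp t| = 2.
Proof.
case/is_transp_tperm: t_transp => i [j [lt_ij ->]].
by rewrite supp_tperm ?cards2 ltn_ord_neq.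
Qed.

Lemma is_transp_tpermE k : t k != k -> t = tperm k (t k).
Proof.
case/is_transp_tperm: t_transp => i [j [_ ->]].
by case: tpermP => [->|->|_ _]; rewrite 1?tpermC ?eqxx.
Qed.

Lemma mem_supp_transp k z : k \in supp t -> z \in supp t -> (z == k) || (z == t k).
Proof.
rewrite !inE => ntk; rewrite {1}(is_transp_tpermE ntk).
by case: tpermP => [->|->|_ _]; rewrite ?eqxx ?orbT.
Qed.

End Transposition.

Lemma supp_transp_inj s t : is_transp s -> is_transp t -> supp s = supp t -> s = t.
Proof.
move=> s_tr t_tr eq_st; case/is_transp_tperm: (s_tr) => i [j [lt_ij def_s]].
have supp_s : supp s = [set i; j] by rewrite def_s supp_tperm ?ltn_ord_neq.
have it : i \in supp t by rewrite -eq_st supp_s !inE eqxx.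
have : t i \in supp s by rewrite eq_st mem_supp_img.
rewrite supp_s !inE => /orP [/eqP ti_i|/eqP ti_j].
  by move: it; rewrite inE ti_i eqxx.
have nti : t i != i by move: it; rewrite inE.
by rewrite (is_transp_tpermE t_tr nti) ti_j def_s.
Qed.

Lemma supp_mul_transp s t : is_transp s -> is_transp t -> s != t ->
  supp (s * t)%g = supp s :|: supp t.
Proof.
move=> s_tr t_tr nst; apply/setP => k; rewrite !inE permM.
case: (eqVneq (s k) k) => [-> //|nsk]; apply/negP => /eqP tsk.
have eq_ts : t k = s k by rewrite -{1}tsk is_transpK.
move: nst; rewrite (is_transp_tpermE s_tr nsk).
by rewrite (is_transp_tpermE t_tr (_ : t k != k)) eq_ts ?eqxx.
Qed.

Lemma card_supp_transpU s t : is_transp s -> is_transp t -> s != t ->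
  ~~ [disjoint supp s & supp t] -> #|supp s :|: supp t| = 3.
Proof.
move=> s_tr t_tr nst meet; rewrite cardsU !card_supp_transp //.
have : 0 < #|supp s :&: supp t| by rewrite card_gt0 setI_eq0.
suff : #|supp s :&: supp t| < 2 by lia.
rewrite ltn_neqAle -{2}(card_supp_transp s_tr) subset_leq_card ?subsetIl // andbT.
apply: contra nst => /eqP card_st; apply/eqP/supp_transp_inj => //.
have eq_supp r : is_transp r -> supp s :&: supp t \subset supp r -> supp s :&: supp t = supp r.
  by move=> r_tr sub; apply/eqP; rewrite eqEcard sub card_supp_transp ?card_st.
by rewrite -(eq_supp s s_tr (subsetIl _ _)) (eq_supp t t_tr (subsetIr _ _)).
Qed.

Lemma connect_transp_mul (e : rel 'I_n) t1 t2 s1 s2 :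
  is_transp t1 -> is_transp t2 -> is_transp s1 -> is_transp s2 -> s1 != s2 ->
  (t1 * t2 = s1 * s2)%g -> connect_sym e ->
  (forall k, e k (t1 k)) -> (forall k, e k (t2 k)) ->
  forall k, connect e k (s1 k) /\ connect e k (s2 k).
Proof.
move=> t1_tr t2_tr s1_tr s2_tr ns12 eq_w e_sym e1 e2.
have ew k : connect e k ((t1 * t2)%g k).
  by rewrite permM; apply: connect_trans (connect1 (e1 k)) (connect1 (e2 _)).
have s2E k : s2 k = (t1 * t2)%g (s1 k) by rewrite eq_w permM is_transpK.
(* Otherwise [s2] would move both [k] and [s1 k], hence be equal to [s1]. *)
have es1 k : connect e k (s1 k).
  apply: contraT => nc; set y := s1 k in nc.
  have nyk : y != k by apply: contraNneq nc => ->; exact: connect0.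
  have s2k : s2 k != k by rewrite s2E; apply: contraNneq nc => <-; rewrite e_sym ew.
  have s2y : s2 y != y.
    by rewrite s2E /y is_transpK //; apply: contraNneq nc => wk; rewrite /y -wk ew.
  have : (y == k) || (y == s2 k) by apply: mem_supp_transp; rewrite ?inE.
  rewrite (negbTE nyk) /= => /eqP y_s2k.
  by move: ns12; rewrite (is_transp_tpermE s1_tr nyk) (is_transp_tpermE s2_tr s2k) -y_s2k eqxx.
by move=> k; split => //; rewrite s2E; apply: connect_trans (es1 k) (ew _).
Qed.

End Support.


Section Inversions.
Variable n : nat.
Local Notation perm := {perm 'I_n}.
Implicit Types (x : perm) (Y : {set 'I_n}) (i j : 'I_n).

Definition pairs Y : {set 'I_n * 'I_n} :=
  [set kl | [&& kl.1 \in Y, kl.2 \in Y & kl.1 < kl.2]].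

(* Inversions are indexed by values rather than positions, because a Bruhat
   label acts on values: [y = x * blabel x y] means [y k = blabel x y (x k)]. *)
Definition inversions Y x : {set 'I_n * 'I_n} :=
  [set kl in pairs Y | x^-1%g kl.2 < x^-1%g kl.1].

Lemma mem_inversions Y x kl : (kl \in inversions Y x) =
  [&& kl.1 \in Y, kl.2 \in Y, kl.1 < kl.2 & x^-1%g kl.2 < x^-1%g kl.1].
Proof. by rewrite !inE -!andbA. Qed.

Lemma inversions_sub Y x : inversions Y x \subset pairs Y.
Proof. by apply/subsetP => kl; rewrite inE => /andP []. Qed.

Lemma card_pairs Y : #|pairs Y| <= 'C(#|Y|, 2).
Proof.
rewrite -cards_draws; pose pr (kl : 'I_n * 'I_n) := [set kl.1; kl.2].
have pr_inj : {in pairs Y &, injective pr}.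
  move=> [a b] [c d]; rewrite !inE /pr /= => /and3P [_ _ ab] /and3P [_ _ cd] eq_pr.
  have mem k : (k \in [set a; b]) = (k \in [set c; d]) by rewrite eq_pr.
  move: (mem a) (mem b) (mem c) (mem d); rewrite !inE -!val_eqE /= => *.
  have [e1 e2] : (a : nat) = c /\ (b : nat) = d by lia.
  by congr (_, _); apply: val_inj.
rewrite -(card_in_imset pr_inj); apply/subset_leq_card/subsetP => B /imsetP [[a b]].
rewrite !inE /pr /= => /and3P [aY bY ab] ->.
by rewrite subUset !sub1set aY bY cards2 ltn_ord_neq.
Qed.

Lemma card_le1_pairs0 Y : pairs Y = set0 -> #|Y| <= 1.
Proof.
move=> pY0; rewrite leqNgt; apply/card_gt1P => -[k [l [kY lY nkl]]].
have no_pair a b : a \in Y -> b \in Y -> a < b -> False.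
  by move=> aY bY ab; move: pY0 => /setP/(_ (a, b)); rewrite !inE aY bY ab.
case: (ltngtP k l) => [|| /val_inj eq_kl]; [exact: no_pair | exact: no_pair |].
by rewrite eq_kl eqxx in nkl.
Qed.

Lemma inversions_meet Y Y' x : inversions Y x = pairs Y -> inversions Y' x = set0 ->
  #|Y :&: Y'| <= 1.
Proof.
move=> invY invY'; apply: card_le1_pairs0; apply/setP => -[k l].
rewrite [RHS]inE; apply/negbTE/negP; rewrite !inE /=.
case/and3P=> [/andP [kY kY'] /andP [lY lY'] kl].
have : (k, l) \in inversions Y x by rewrite invY inE kY lY kl.
rewrite mem_inversions => /and4P [_ _ _ xlk].
have : (k, l) \in inversions Y' x by rewrite mem_inversions kY' lY' kl xlk.
by rewrite invY' inE.
Qed.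

Lemma blen_inversions x : blen x = #|inversions setT x|.
Proof.
pose sw (kl : 'I_n * 'I_n) := (x kl.2, x kl.1).
have sw_inj : injective sw by move=> [a b] [c d] [/perm_inj-> /perm_inj->].
rewrite /blen -(card_imset _ sw_inj); apply: eq_card => -[k l].
rewrite !inE /=; apply/imsetP/idP => [[[a b]] | /andP [kl lk]].
  by rewrite inE /= => /andP [ab ba] [-> ->]; rewrite !permK ba.
by exists (x^-1%g l, x^-1%g k); rewrite ?inE /sw /= !permKV ?lk ?kl.
Qed.

Lemma inversions_tperm Y x i j : i \in Y -> j \in Y -> i < j -> x^-1%g i < x^-1%g j ->
  #|inversions Y x| < #|inversions Y (x * tperm i j)|.
Proof.
move=> iY jY ij xij; set t := tperm i j.
have invE kl : (kl \in inversions Y (x * t)) =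
    [&& kl.1 \in Y, kl.2 \in Y, kl.1 < kl.2 & x^-1%g (t kl.2) < x^-1%g (t kl.1)].
  by rewrite mem_inversions invMg tpermV !permM.
have tY k : (t k \in Y) = (k \in Y) by case: tpermP => [->|->|]; rewrite ?iY ?jY.
(* Relabel inversions through [t]; a pair that [t] would unsort is kept as is:
   it then shares exactly one end with [(i, j)] and stays inverted because
   [x^-1 i < x^-1 j]. *)
pose g (kl : 'I_n * 'I_n) := if t kl.1 < t kl.2 then (t kl.1, t kl.2) else kl.
have g_inj : {in inversions Y x &, injective g}.
  move=> [a b] [c d]; rewrite !mem_inversions /g /= => /and4P [_ _ ab _] /and4P [_ _ cd _].
  case: ifP; case: ifP => /= tcd tab [e1 e2].
  - by rewrite (perm_inj e1) (perm_inj e2).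
  - by move: tcd; rewrite -e1 -e2 !tpermK ab.
  - by move: tab; rewrite e1 e2 !tpermK cd.
  - by rewrite e1 e2.
have ij_new : (i, j) \in inversions Y (x * t) by rewrite invE /t tpermL tpermR iY jY ij.
have ij_old : (i, j) \notin inversions Y x by rewrite mem_inversions iY jY ij -leqNgt ltnW.
have g_sub : g @: inversions Y x \subset inversions Y (x * t) :\ (i, j).
  apply/subsetP => _ /imsetP [[k l] kl_inv ->].
  move: (kl_inv); rewrite mem_inversions => /and4P [/= kY lY kl xlk].
  rewrite /g in_setD1 invE /=; case: ifP => tkl /=.
    rewrite !tpermK !tY kY lY tkl xlk /= andbT; apply/negP => /eqP [tki tlj].
    by move: kl; rewrite -(tpermK i j k) -(tpermK i j l) -/t tki tlj tpermL tpermR ltnNge ltnW.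
  rewrite kY lY kl /=; apply/andP; split.
    by apply: contraNneq ij_old => -[<- <-].
  by move: tkl; rewrite /t; case: (tpermP i j k); case: (tpermP i j l) => *; subst; lia.
rewrite (cardsD1 (i, j) (inversions Y (x * t))) ij_new add1n ltnS.
by rewrite -(card_in_imset g_inj) subset_leq_card.
Qed.

End Inversions.


Section BruhatEdges.
Variable n : nat.
Local Notation perm := {perm 'I_n}.
Implicit Types (x y z t : perm) (Y : {set 'I_n}) (i j : 'I_n).

Lemma mul_blabel x y : (x * blabel x y)%g = y.
Proof. by rewrite /blabel mulKVg. Qed.

Lemma blabel_mulr x t : blabel x (x * t) = t.
Proof. exact: mulKg. Qed.

Lemma blabel_eq x y t : y = (x * t)%g -> blabel x y = t.
Proof. by move->; apply: blabel_mulr. Qed.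

Lemma bedge_blen x y : bedge x y -> blen x < blen y.
Proof. by case/andP. Qed.

Lemma bedge_transp x y : bedge x y -> is_transp (blabel x y).
Proof. by case/andP. Qed.

Lemma bedge_tperm_lt x i j : bedge x (x * tperm i j) -> i < j -> x^-1%g i < x^-1%g j.
Proof.
move=> /bedge_blen lt_xy ij; rewrite ltn_neqAle; apply/andP; split.
  by apply: contraTneq ij => eq_ij; rewrite (perm_inj (val_inj eq_ij)) ltnn.
rewrite leqNgt; apply: contraTN lt_xy => xji; set y := (x * tperm i j)%g.
have yij : y^-1%g i < y^-1%g j by rewrite invMg tpermV !permM tpermL tpermR.
have := inversions_tperm (in_setT i) (in_setT j) ij yij.
by rewrite -mulgA tperm2 mulg1 -!blen_inversions -leqNgt => /ltnW.
Qed.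

Lemma bedge_tperm x y : bedge x y -> exists i j,
  [/\ i < j, blabel x y = tperm i j, y = (x * tperm i j)%g & x^-1%g i < x^-1%g j].
Proof.
move=> xy; have [i [j [ij lab_ij]]] := is_transp_tperm (bedge_transp xy).
have def_y : y = (x * tperm i j)%g by rewrite -lab_ij mul_blabel.
by exists i, j; split => //; apply: bedge_tperm_lt ij; rewrite -def_y.
Qed.

Lemma bedge_inversions Y x y : bedge x y -> supp (blabel x y) \subset Y ->
  #|inversions Y x| < #|inversions Y y|.
Proof.
case/bedge_tperm => i [j [ij -> -> xij]].
rewrite supp_tperm ?ltn_ord_neq // subUset !sub1set => /andP [iY jY].
exact: inversions_tperm.
Qed.

Lemma bedge_blabel_neq x y z : bedge x y -> bedge y z -> blabel x y != blabel y z.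
Proof.
move=> xy yz; apply/eqP => eq_lab.
have zx : z = x.
  by rewrite -(mul_blabel y z) -eq_lab -{1}(mul_blabel x y) -mulgA is_transp2
    ?mulg1 // bedge_transp.
by move: (ltn_trans (bedge_blen xy) (bedge_blen yz)); rewrite zx ltnn.
Qed.

End BruhatEdges.


Section Triangle.
Variables (n : nat) (x0 x1 x2 x3 r1 r2 r3 t : {perm 'I_n}).
Hypotheses (def_x1 : x1 = (x0 * r1)%g) (def_x2 : x2 = (x1 * r2)%g).
Hypotheses (def_x3 : x3 = (x2 * r3)%g) (def_t : x3 = (x0 * t)%g).
Hypotheses (e01 : bedge x0 x1) (e12 : bedge x1 x2) (e23 : bedge x2 x3).
Hypothesis t_transp : is_transp t.

Let lab01 : blabel x0 x1 = r1 := blabel_eq def_x1.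
Let lab12 : blabel x1 x2 = r2 := blabel_eq def_x2.
Let lab23 : blabel x2 x3 = r3 := blabel_eq def_x3.

Let r1_transp : is_transp r1. Proof. by rewrite -lab01 bedge_transp. Qed.
Let r2_transp : is_transp r2. Proof. by rewrite -lab12 bedge_transp. Qed.
Let r3_transp : is_transp r3. Proof. by rewrite -lab23 bedge_transp. Qed.

Let r12 : r1 != r2. Proof. by rewrite -lab01 -lab12 bedge_blabel_neq. Qed.
Let r23 : r2 != r3. Proof. by rewrite -lab12 -lab23 bedge_blabel_neq. Qed.

Let labels_mul : (r1 * r2 * r3 = t)%g.
Proof. by apply: (mulgI x0); rewrite -def_t def_x3 def_x2 def_x1 !mulgA. Qed.

Lemma triangle_supp : supp r1 :|: supp r2 = supp t :|: supp r3.
Proof.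
have r12_t3 : (r1 * r2 = t * r3)%g by rewrite -labels_mul -mulgA is_transp2 ?mulg1.
have nt3 : t != r3.
  apply: contra r12 => /eqP t3; move: r12_t3; rewrite t3 (is_transp2 r3_transp) => /eqP.
  by rewrite [r1 == r2]eq_mulgV1 (is_transpV r2_transp).
by rewrite -!supp_mul_transp // r12_t3.
Qed.

Lemma triangle_supp_meet : ~~ [disjoint supp r1 & supp r2].
Proof.
apply/negP => disj.
have r23_1t : (r2 * r3 = r1 * t)%g by rewrite -labels_mul !mulgA is_transp2 ?mul1g.
have n1t : r1 != t.
  apply: contra r23 => /eqP t1; move: r23_1t; rewrite -t1 (is_transp2 r1_transp) => /eqP.
  by rewrite [r2 == r3]eq_mulgV1 (is_transpV r3_transp).
have r13 : r1 = r3.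
  apply: supp_transp_inj => //; apply/eqP; rewrite eqEcard !card_supp_transp // andbT.
  apply/subsetP => k k1; have : k \in supp r2 :|: supp r3.
    by rewrite -supp_mul_transp // r23_1t supp_mul_transp // inE k1.
  by rewrite inE (disjointFr disj k1).
(* As [r2] fixes the support of [r1], the last step [x2 -> x2 * r1] reverses
   the first step [x0 -> x0 * r1], against the orientation of Bruhat edges. *)
have [i [j [ij lab_ij _ x0ij]]] := bedge_tperm e01; rewrite lab01 in lab_ij.
have fix2 k : k \in [set i; j] -> r2^-1%g k = k.
  move=> kij; rewrite is_transpV //; apply: notin_supp.
  by rewrite (disjointFr disj) // lab_ij supp_tperm ?ltn_ord_neq.
have e23' : bedge x2 (x2 * tperm i j) by rewrite -lab_ij r13 -def_x3.
have := bedge_tperm_lt e23' ij.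
rewrite def_x2 def_x1 !invMg !permM !fix2 ?set21 ?set22 // lab_ij tpermV tpermL tpermR.
by rewrite ltnNge (ltnW x0ij).
Qed.

Lemma triangle_card : #|supp r1 :|: supp r2| = 3.
Proof. exact: card_supp_transpU triangle_supp_meet. Qed.

Lemma triangle_inversions (Y := supp r1 :|: supp r2) :
  inversions Y x0 = set0 /\ inversions Y x3 = pairs Y.
Proof.
have sub3 : supp r3 \subset Y by rewrite /Y triangle_supp subsetUr.
have i01 : #|inversions Y x0| < #|inversions Y x1|.
  by apply: bedge_inversions; rewrite // lab01 subsetUl.
have i12 : #|inversions Y x1| < #|inversions Y x2|.
  by apply: bedge_inversions; rewrite // lab12 subsetUr.
have i23 : #|inversions Y x2| < #|inversions Y x3|.
  by apply: bedge_inversions; rewrite // lab23.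
have pairsY : #|pairs Y| <= 3 by rewrite -[3]/('C(3, 2)) -triangle_card card_pairs.
have i3 := leq_trans (subset_leq_card (inversions_sub Y x3)) pairsY.
split; first by apply/eqP; rewrite -cards_eq0; lia.
by apply/eqP; rewrite eqEcard inversions_sub; lia.
Qed.

End Triangle.


Section Paths.
Variables n h : nat.
Local Notation perm := {perm 'I_n}.
Local Notation path := {ffun 'I_h.+1 -> perm}.
Implicit Types (p q : path) (m : nat).

Definition vtx p m : perm := p (inord m).
Definition lab p m : perm := blabel (vtx p m) (vtx p m.+1).

Lemma vtx_ord p (i : 'I_h.+1) : p i = vtx p i.
Proof. by rewrite /vtx inord_val. Qed.

Lemma vtxS p m : vtx p m.+1 = (vtx p m * lab p m)%g.
Proof. by rewrite mul_blabel. Qed.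

Lemma bpath_bedge p m : bpath p -> m < h -> bedge (vtx p m) (vtx p m.+1).
Proof.
move=> /forallP p_path lt_mh; have := p_path (Ordinal lt_mh).
by rewrite (vtx_ord p (prv _)) (vtx_ord p (nxt _)).
Qed.

Lemma lab_transp p m : bpath p -> m < h -> is_transp (lab p m).
Proof. by move=> p_path /(bpath_bedge p_path) /bedge_transp. Qed.

Lemma bpath_blen p i j : bpath p -> i < j -> j <= h -> blen (vtx p i) < blen (vtx p j).
Proof.
move=> p_path lt_ij; elim: j lt_ij => // j IHj.
rewrite ltnS leq_eqVlt => /orP [/eqP -> | lt_ij] lt_jh.
  exact/bedge_blen/bpath_bedge.
exact: ltn_trans (IHj lt_ij (ltnW lt_jh)) (bedge_blen (bpath_bedge p_path lt_jh)).
Qed.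

Lemma odd_vtx p m : bpath p -> m <= h -> odd_perm (vtx p m) = odd m (+) odd_perm (vtx p 0).
Proof.
move=> p_path; elim: m => // m IHm lt_mh.
rewrite vtxS odd_permM IHm ?(ltnW lt_mh) // (odd_transp (lab_transp p_path lt_mh)).
by rewrite addbT negb_add.
Qed.

Lemma lab_neq p m : bpath p -> m.+1 < h -> lab p m != lab p m.+1.
Proof. by move=> p_path lt_mh; rewrite bedge_blabel_neq // bpath_bedge // ltnW. Qed.

Definition lab_rel p : rel 'I_n := fun a b => [exists k : 'I_h, lab p k a == b].

Lemma lab_rel_sym p : bpath p -> connect_sym (lab_rel p).
Proof.
move=> p_path; apply: sym_connect_sym => a b.
by apply/existsP/existsP => -[k /eqP <-]; exists k; rewrite is_transpK ?lab_transp.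
Qed.

Lemma lab_rel_lab p m : m < h -> forall a, lab_rel p a (lab p m a).
Proof. by move=> lt_mh a; apply/existsP; exists (Ordinal lt_mh). Qed.

Lemma connect_lab_supp p m a b : bpath p -> m < h ->
  a \in supp (lab p m) -> b \in supp (lab p m) -> connect (lab_rel p) a b.
Proof.
move=> p_path lt_mh a_m b_m.
case/orP: (mem_supp_transp (lab_transp p_path lt_mh) a_m b_m) => /eqP ->.
  exact: connect0.
exact/connect1/lab_rel_lab.
Qed.

Lemma connect_lab_suppU p m a b : bpath p -> m.+1 < h ->
  ~~ [disjoint supp (lab p m) & supp (lab p m.+1)] ->
  a \in supp (lab p m) :|: supp (lab p m.+1) -> b \in supp (lab p m) :|: supp (lab p m.+1) ->
  connect (lab_rel p) a b.
Proof.
move=> p_path lt_mh; rewrite -setI_eq0 => /set0Pn [z]; rewrite inE => /andP [z_m z_m1].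
have conn_z c : c \in supp (lab p m) :|: supp (lab p m.+1) -> connect (lab_rel p) c z.
  rewrite inE => /orP [c_m | c_m1]; first exact: connect_lab_supp p_path (ltnW lt_mh) c_m z_m.
  exact: connect_lab_supp p_path lt_mh c_m1 z_m1.
move=> /conn_z az /conn_z bz; apply: connect_trans az _.
by rewrite lab_rel_sym.
Qed.

Lemma connect_lab_closed p (S : {set 'I_n}) a b : bpath p ->
  (forall m, m < h -> (supp (lab p m) \subset S) || [disjoint supp (lab p m) & S]) ->
  connect (lab_rel p) a b -> a \in S -> b \in S.
Proof.
move=> p_path S_lab ab; have S_closed : closed (lab_rel p) S.
  apply: (intro_closed (lab_rel_sym p_path)) => c d /existsP [k /eqP <-].
  exact/supp_closed/S_lab.
by rewrite (closed_connect S_closed ab).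
Qed.

End Paths.


Section Flips.
Variables n h : nat.
Local Notation path := {ffun 'I_h.+1 -> {perm 'I_n}}.
Implicit Types (p q : path).

Lemma flip_step_sym p q : flip_step p q -> flip_step q p.
Proof.
case/and3P=> p_path q_path /existsP [i /and4P [i0 ih npq /forallP agree]].
apply/and3P; split=> //; apply/existsP; exists i; rewrite i0 ih eq_sym npq.
by apply/forallP => j; rewrite [q j == _]eq_sym; apply: agree.
Qed.

Lemma flip_stepP p q : flip_step p q -> [/\ bpath p, bpath q &
  exists2 m, 0 < m < h & forall j, j <= h -> j != m -> vtx p j = vtx q j].
Proof.
case/and3P=> p_path q_path /existsP [i /and4P [i0 ih _ /forallP agree]].
split=> //; exists (i : nat); first exact/andP.
move=> j le_jh nji; apply/eqP/(implyP (agree (inord j))).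
by apply: contra nji => /eqP <-; rewrite inordK.
Qed.

Lemma flip_ends p q : flip_step p q -> vtx q 0 = vtx p 0 /\ vtx q h = vtx p h.
Proof.
case/flip_stepP=> _ _ [m /andP [m0 mh] agree].
by split; symmetry; apply: agree; rewrite // neq_ltn ?m0 ?mh ?orbT.
Qed.

Lemma flip_lab_rel p q a b : flip_step p q -> lab_rel q a b -> connect (lab_rel p) a b.
Proof.
case/flip_stepP=> p_path q_path [[//|m] /andP [_ lt_mh] agree] /existsP [k /eqP <-].
have lt_m1 : m < h by apply: ltnW.
case: (boolP ((k : nat) \in [:: m; m.+1])) => [k_m | ].
  have mul_lab : (lab p m * lab p m.+1 = lab q m * lab q m.+1)%g.
    have eq_m : vtx p m = vtx q m by apply: agree; [exact: ltnW | rewrite neq_ltn ltnSn].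
    have eq_m2 : vtx p m.+2 = vtx q m.+2 by apply: agree; rewrite // neq_ltn ltnSn orbT.
    by apply: (mulgI (vtx p m)); rewrite mulgA -!vtxS eq_m2 {1}eq_m mulgA -!vtxS.
  have [] := connect_transp_mul (lab_transp p_path lt_m1) (lab_transp p_path lt_mh)
    (lab_transp q_path lt_m1) (lab_transp q_path lt_mh) (lab_neq q_path lt_mh) mul_lab
    (lab_rel_sym p_path) (lab_rel_lab p lt_m1) (lab_rel_lab p lt_mh) a.
  by rewrite !inE in k_m; case/orP: k_m => /eqP ->.
rewrite !inE negb_or => /andP [nkm nkm1]; have lt_kh := ltn_ord k.
by apply/connect1; rewrite /lab -(agree k) ?(ltnW lt_kh) // -(agree k.+1) // lab_rel_lab.
Qed.

Lemma connect_flip p q : flip_step p q -> connect (lab_rel q) =2 connect (lab_rel p).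
Proof.
move=> pq a b; apply/idP/idP; apply: connect_sub => c d.
  exact: flip_lab_rel pq.
exact: flip_lab_rel (flip_step_sym pq).
Qed.

Definition flip_invariants p q : Prop :=
  [/\ bpath q, vtx q 0 = vtx p 0, vtx q h = vtx p h &
      connect (lab_rel q) =2 connect (lab_rel p)].

Lemma flipclass_inv p q : bpath p -> connect (@flip_step n h) p q -> flip_invariants p q.
Proof.
move=> p_path /connectP [s]; elim: s p p_path => [|r s IHs] p p_path /=; first by move=> _ ->.
case/andP=> pr rs last_q; have [_ r_path _] := and3P pr.
have [q_path qr0 qrh qr_conn] := IHs r r_path rs last_q.
have [rp0 rph] := flip_ends pr.
split=> //; first by rewrite qr0.
  by rewrite qrh.
by move=> c d; rewrite qr_conn (connect_flip pr).
Qed.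

End Flips.


Lemma bpath_triangle n h (p : {ffun 'I_h.+1 -> {perm 'I_n}}) m t :
  bpath p -> m.+2 < h -> is_transp t -> vtx p m.+3 = (vtx p m * t)%g ->
  let Y := supp (lab p m) :|: supp (lab p m.+1) in
  [/\ #|Y| = 3, Y = supp t :|: supp (lab p m.+2),
      ~~ [disjoint supp (lab p m) & supp (lab p m.+1)],
      inversions Y (vtx p m) = set0 & inversions Y (vtx p m.+3) = pairs Y].
Proof.
move=> p_path lt_mh t_transp def_t Y.
have e01 : bedge (vtx p m) (vtx p m.+1) by apply: bpath_bedge p_path _; lia.
have e12 : bedge (vtx p m.+1) (vtx p m.+2) by apply: bpath_bedge p_path _; lia.
have e23 : bedge (vtx p m.+2) (vtx p m.+3) by apply: bpath_bedge.
have def1 := vtxS p m; have def2 := vtxS p m.+1; have def3 := vtxS p m.+2.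
split; first exact: triangle_card def1 def2 def3 def_t e01 e12 e23 t_transp.
- exact: triangle_supp def1 def2 def3 def_t e01 e12 e23 t_transp.
- exact: triangle_supp_meet def1 def2 def3 def_t e01 e12 e23 t_transp.
- by case: (triangle_inversions def1 def2 def3 def_t e01 e12 e23 t_transp).
- by case: (triangle_inversions def1 def2 def3 def_t e01 e12 e23 t_transp).
Qed.

Section SameFlipclass.
Variable n : nat.
Local Notation path4 := {ffun 'I_5 -> {perm 'I_n}}.
Variables p q q' : path4.
Hypotheses (q_inv : flip_invariants p q) (q'_inv : flip_invariants p q').

Let q_path : bpath q. Proof. by case: q_inv. Qed.
Let q'_path : bpath q'. Proof. by case: q'_inv. Qed.
Let eq0 : vtx q' 0 = vtx q 0. Proof. by case: q_inv q'_inv => _ -> _ _ [_ -> _ _]. Qed.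
Let eq4 : vtx q' 4 = vtx q 4. Proof. by case: q_inv q'_inv => _ _ -> _ [_ _ -> _]. Qed.
Let eq_conn : connect (lab_rel q') =2 connect (lab_rel q).
Proof. by case: q_inv q'_inv => _ _ _ qc [_ _ _ q'c] a b; rewrite qc q'c. Qed.

(* On the 3-element sets [Y], [Y'] carrying the steps [vtx q' 0 -> vtx q' 3]
   and [vtx q 1 -> vtx q 4], the permutation [vtx q 1 = vtx q' 3] inverts all of
   [Y] and none of [Y'], so they share at most one point.  But [Y] is connected
   by the labels of [q'], hence by those of [q], which confines it to
   [supp (lab q 0)] plus one point of [Y']. *)
Lemma vtx1_neq_vtx3 : vtx q 1 != vtx q' 3.
Proof.
apply/eqP => eq13; set t := lab q 0.
have t_transp : is_transp t by apply: lab_transp.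
have def_t : vtx q' 3 = (vtx q' 0 * t)%g by rewrite -eq13 eq0 vtxS.
have def_t' : vtx q 4 = (vtx q 1 * lab q' 3)%g by rewrite -eq4 vtxS eq13.
have [cardY suppY meetY _ invY] := bpath_triangle q'_path (isT : 2 < 4) t_transp def_t.
have [_ suppY' _ invY' _] :=
  bpath_triangle q_path (isT : 3 < 4) (lab_transp q'_path (isT : 3 < 4)) def_t'.
set Y := supp (lab q' 0) :|: supp (lab q' 1) in cardY suppY meetY invY.
set Y' := supp (lab q 1) :|: supp (lab q 2) in suppY' invY'.
have tY : supp t \subset Y by rewrite suppY subsetUl.
have YY' : #|Y :&: Y'| <= 1 by rewrite eq13 in invY'; apply: inversions_meet invY invY'.
have [a a_t] : exists a, a \in supp t by apply/card_gt0P; rewrite card_supp_transp.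
have [f fY f_t] : exists2 f, f \in Y & f \notin supp t.
  apply/subsetPn; apply: contraTN isT => Y_t.
  by have := subset_leq_card Y_t; rewrite cardY card_supp_transp.
have conn_af : connect (lab_rel q) a f.
  rewrite -eq_conn; apply: connect_lab_suppU q'_path (isT : 1 < 4) meetY _ fY.
  exact: subsetP tY a a_t.
have lab_Y' k : 0 < k < 4 -> supp (lab q k) \subset Y'.
  by case: k => [|[|[|[]]]] // _; rewrite ?subsetUl ?subsetUr // suppY' subsetUr.
case: (boolP [disjoint supp t & Y']) => [disj | ].
  suff : f \in supp t by rewrite (negbTE f_t).
  apply: connect_lab_closed q_path _ conn_af a_t => -[_|k lt_k4]; first by rewrite subxx.
  by rewrite (disjointWl (lab_Y' k.+1 lt_k4)) ?orbT // disjoint_sym.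
rewrite -setI_eq0 => /set0Pn [g]; rewrite inE => /andP [g_t gY'].
have : f \in supp t :|: Y'.
  apply: connect_lab_closed q_path _ conn_af _ => [[_|k lt_k4]|]; last by rewrite inE a_t.
    by rewrite subsetUl.
  by rewrite (subset_trans (lab_Y' k.+1 lt_k4)) ?subsetUr.
rewrite inE (negbTE f_t) /= => fY'.
suff : 1 < #|Y :&: Y'| by rewrite ltnNge YY'.
apply/card_gt1P; exists f, g; rewrite !in_setI fY fY' (subsetP tY g g_t) gY'.
by split=> //; apply: contraNneq f_t => ->.
Qed.

Lemma vtx_time_lt i j : i < j -> j <= 4 -> vtx q i != vtx q' j.
Proof.
move=> ij j4; apply/eqP => eq_ij.
have i4 : i <= 4 by apply: ltnW (leq_trans ij j4).
have [i0 | i_pos] := posnP i.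
  by move: (bpath_blen q'_path ij j4); rewrite -eq_ij i0 eq0 ltnn.
have [j_4 | j3] : j = 4 \/ j < 4 by lia.
  by move: (bpath_blen q_path ij j4); rewrite eq_ij j_4 eq4 ltnn.
have odd_ij : odd i = odd j.
  have := congr1 (@odd_perm _) eq_ij.
  by rewrite (odd_vtx q_path i4) (odd_vtx q'_path j4) eq0 => /addIb.
have [i1 j_3] : i = 1 /\ j = 3.
  by move: i_pos ij odd_ij j3; clear; case: i => [|[|[|[|i]]]] //; case: j => [|[|[|[|j]]]].
by subst i j; move: vtx1_neq_vtx3; rewrite eq_ij eqxx.
Qed.

End SameFlipclass.

Lemma flip_invariants_time n (p q q' : {ffun 'I_5 -> {perm 'I_n}}) i j :
  flip_invariants p q -> flip_invariants p q' -> i <= 4 -> j <= 4 ->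
  vtx q i = vtx q' j -> i = j.
Proof.
move=> q_inv q'_inv i4 j4 eq_ij; case: (ltngtP i j) => [ij|ji|//].
  by move: (vtx_time_lt q_inv q'_inv ij j4); rewrite eq_ij eqxx.
by move: (vtx_time_lt q'_inv q_inv ji i4); rewrite eq_ij eqxx.
Qed.


Lemma lgraph_iso_time n h (F : {set {ffun 'I_h.+1 -> {perm 'I_n}}}) :
  (forall p q (i j : 'I_h.+1), p \in F -> q \in F -> p i = q j -> i = j) ->
  lgraph_iso (supV F) (supE F) (tsupV F) (tsupE F).
Proof.
move=> time_uniq.
pose time a : 'I_h.+1 := odflt ord0 [pick i | [exists p in F, p i == a]].
have timeE p i : p \in F -> time (p i) = i.
  move=> pF; rewrite /time; case: pickP => [j /existsP [q /andP [qF /eqP]] | none] /=.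
    exact: time_uniq.
  by move: (none i) => /existsP; case; exists p; rewrite pF eqxx.
have mem_supE e : e \in supE F -> (e.1.1 \in supV F) && (e.2 \in supV F).
  case/bigcupP=> p pF /imsetP [i _ ->] /=.
  by apply/andP; split; apply/bigcupP; exists p => //; apply: imset_f.
have mem_tsupE e : e \in tsupE F -> (e.1.1 \in tsupV F) && (e.2 \in tsupV F).
  case/bigcupP=> p pF /imsetP [i _ ->] /=.
  apply/andP; split; apply/bigcupP; exists p => //; apply/imsetP.
    by exists (prv i).
  by exists (nxt i).
exists (fun a => (a, time a)); split=> //.
- by move=> a b _ _ [].
- apply/setP => -[a i]; apply/imsetP/bigcupP.
    case=> b /bigcupP [p pF /imsetP [j _ ->]] [-> ->].
    by exists p => //; apply/imsetP; exists j; rewrite ?timeE.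
  case=> p pF /imsetP [j _ [-> ->]]; exists (p j); last by rewrite timeE.
  by apply/bigcupP; exists p => //; apply: imset_f.
- move=> a b t _ _; apply/bigcupP/bigcupP => [[p pF /imsetP [i _ [-> -> ->]]] |].
    by exists p => //; apply/imsetP; exists i; rewrite ?timeE.
  case=> p pF /imsetP [i _ [-> _ -> -> _]].
  by exists p => //; apply: imset_f.
Qed.

Theorem proposition7p7 (n : nat) (F : {set {ffun 'I_5 -> {perm 'I_n}}}) :
  flipclass F ->
  lgraph_iso (supV F) (supE F) (tsupV F) (tsupE F).
Proof.
case=> p [p_path ->]; apply: lgraph_iso_time => q q' i j.
rewrite !inE => /(flipclass_inv p_path) q_inv /(flipclass_inv p_path) q'_inv.
rewrite !vtx_ord => /(flip_invariants_time q_inv q'_inv) eq_ij.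
by apply: val_inj; apply: eq_ij; rewrite -ltnS.
Qed.
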